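(* Let $\mathcal I=\mathbb R^d$ with the standard inner product, let $\mathcal G$ be a compact Abelian group with normalized Haar measure $dg$, acting on $\mathcal I$ by a unitary representation $I\mapsto gI$, and let $\mathcal T$ be the unit sphere of $\mathcal I$. For $I\in\mathcal I$ let $\rho_I$ be the law of $g\mapsto gI$ on $(\mathcal G,dg)$, and for $t\in\mathcal T$ let $\rho_I^t$ be the law on $\mathbb R$ of $g\mapsto\langle gI,t\rangle$ (the pushforward of $\rho_I$ under $I\mapsto\langle I,t\rangle$). Define $\mu(I)(t)=\mu^t(I)$ to be the cumulative distribution function of $\rho_I^t$, i.e. $\mu^t(I)(b)=\rho_I^t((-\infty,b])$ for $b\in\mathbb R$. Then for all $I\in\mathcal I$, $t\in\mathcal T$, $$\mu^t(I)(b)=\int \eta_b(\langle I,gt\rangle)\,dg,\qquad b\in\mathbb R,$$ where $\eta_b(a)=H(b-a)$ and $H$ is the Heaviside step function. Moreover, for all $I,I'\in\mathcal I$, $$I\sim I'\iff \mu(I)=\mu(I').$$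
   Context: $I\sim I'$ means there exists $g\in\mathcal G$ with $gI=I'$. $H(x)=1$ for $x\ge 0$ and $H(x)=0$ for $x<0$. *)

From HB Require Import structures.
From mathcomp Require Import all_boot all_order all_algebra.
From mathcomp Require Import all_classical all_reals all_analysis.
Set Implicit Arguments. Unset Strict Implicit. Unset Printing Implicit Defensive.
Import Order.TTheory GRing.Theory Num.Theory.
Import numFieldNormedType.Exports.
Local Open Scope classical_set_scope.
Local Open Scope ring_scope.

Definition borel_type (G : topologicalZmodType) : Type := G.
HB.instance Definition _ (G : topologicalZmodType) :=
  Choice.copy (borel_type G) G.
HB.instance Definition _ (G : topologicalZmodType) :=
  isPointed.Build (borel_type G) (0 : G).
Lemma borel_sigmaC (G : topologicalZmodType) (A : set (borel_type G)) :
  <<s (@open G) >> A -> <<s (@open G) >> (~` A).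
Proof. by move=> sGA; rewrite -setTD; exact: sigma_algebraCD. Qed.
HB.instance Definition _ (G : topologicalZmodType) :=
  @isMeasurable.Build (sigma_display (@open G)) (borel_type G)
  <<s (@open G) >> (@sigma_algebra0 _ setT (@open G)) (@borel_sigmaC G)
  (@sigma_algebra_bigcup _ setT (@open G)).
Notation Borel G := (borel_type G).

Definition dotv (R : pzRingType) (d : nat) (u v : 'cV[R]_d) : R :=
  \sum_(i < d) u i ord0 * v i ord0.

Definition unit_sphere (R : pzRingType) (d : nat) : set 'cV[R]_d :=
  [set t | dotv t t = 1].

Definition heaviside (R : realDomainType) (x : R) : R := if 0 <= x then 1 else 0.

Definition eta_step (R : realDomainType) (b a : R) : R := heaviside (b - a).

(* Normalized Haar measure on a compact (Hausdorff) abelian group G: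
   a Radon (outer regular on Borel sets, inner regular by compacts on open
   sets), translation-invariant probability measure on the Borel sets. *)
Definition normalized_haar (R : realType) (G : topologicalZmodType)
    (mu : set (Borel G) -> \bar R) : Prop :=
  [/\ mu setT = 1%E,
      (forall (g : G) (A : set G), measurable (A : set (Borel G)) ->
         mu ((fun x : G => g + x) @` A) = mu A),
      (forall A : set G, measurable (A : set (Borel G)) ->
         mu A = ereal_inf [set mu U | U in [set U : set G | open U /\ A `<=` U]]) &
      (forall U : set G, open U ->
         mu U = ereal_sup [set mu K | K in [set K : set G | compact K /\ K `<=` U]])].

(* A (continuous) unitary = orthogonal representation of G on R^d,
   g I := rep g *m I. *)
Definition unitary_rep (R : realType) (G : topologicalZmodType) (d : nat)
    (rep : G -> 'M[R]_d) : Prop :=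
  [/\ rep 0 = 1%:M,
      (forall g h : G, rep (g + h) = rep g *m rep h),
      (forall g : G, (rep g)^T *m rep g = 1%:M) &
      (forall i j : 'I_d, continuous (fun g : G => rep g i j))].

Definition orbit_equiv (R : realType) (G : topologicalZmodType) (d : nat)
    (rep : G -> 'M[R]_d) (I I' : 'cV[R]_d) : Prop :=
  exists g : G, rep g *m I = I'.

Definition proj_law (R : realType) (G : topologicalZmodType) (d : nat)
    (mu : set (Borel G) -> \bar R) (rep : G -> 'M[R]_d) (I t : 'cV[R]_d)
    : set R -> \bar R :=
  pushforward mu (fun g : Borel G => dotv (rep g *m I) t).

Definition mu_t (R : realType) (G : topologicalZmodType) (d : nat)
    (mu : set (Borel G) -> \bar R) (rep : G -> 'M[R]_d) (I t : 'cV[R]_d)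
    (b : R) : \bar R :=
  proj_law mu rep I t `]-oo, b].

From HB Require Import structures.
From mathcomp Require Import all_boot all_order all_algebra.
From mathcomp Require Import all_classical all_reals all_analysis.
From mathcomp Require Import ring lra measurable_realfun.
Import Order.TTheory GRing.Theory Num.Theory.
Import numFieldNormedType.Exports.
Set Implicit Arguments.
Unset Strict Implicit.
Unset Printing Implicit Defensive.

Local Open Scope classical_set_scope.
Local Open Scope ring_scope.

(* Both claims rest on two properties of the normalized Haar measure: invariance
   under translations and, G being abelian, under g |-> -g (proved by Fubini), and
   positivity on nonempty open sets (by compactness).  Since g^T = g^-1,
   <I, g t> = <g^-1 I, t>, so inversion invariance turns the CDF of <g I, t> into
   the integral of the step function of <I, g t>.  Translating I along its orbit
   preserves every mu^t(I) by translation invariance.  Conversely, positivity on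
   open sets shows that the CDF of <g I, t> determines max_g <g I, t>; taking
   t = I'/|I'| gives some g with |I'|^2 <= <g I, I'>, symmetrically |I| = |I'|, and
   then |g I - I'|^2 = 2 |I'|^2 - 2 <g I, I'> <= 0. *)

Section dot_product.
Variables (R : realFieldType) (d : nat).
Implicit Types (u v w : 'cV[R]_d) (A : 'M[R]_d).

Lemma dotvC u v : dotv u v = dotv v u.
Proof. by apply: eq_bigr => i _; rewrite mulrC. Qed.

Lemma dotv_mulmxl A u v : dotv (A *m u) v = dotv u (A^T *m v).
Proof.
have dotvE w w' : dotv w w' = (w^T *m w') ord0 ord0.
  by rewrite !mxE; apply: eq_bigr => i _; rewrite mxE.
by rewrite !dotvE trmx_mul mulmxA.
Qed.

Lemma dotvDl u v w : dotv (u + v) w = dotv u w + dotv v w.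
Proof. by rewrite /dotv -big_split; apply: eq_bigr => i _; rewrite !mxE mulrDl. Qed.

Lemma dotvNl u v : dotv (- u) v = - dotv u v.
Proof. by rewrite /dotv -sumrN; apply: eq_bigr => i _; rewrite !mxE mulNr. Qed.

Lemma dotvZl (a : R) u v : dotv (a *: u) v = a * dotv u v.
Proof. by rewrite /dotv mulr_sumr; apply: eq_bigr => i _; rewrite !mxE mulrA. Qed.

Lemma dotvZr (a : R) u v : dotv u (a *: v) = a * dotv u v.
Proof. by rewrite dotvC dotvZl dotvC. Qed.

Lemma dotv0l v : dotv 0 v = 0.
Proof. by rewrite -(scale0r 0) dotvZl mul0r. Qed.

Lemma dotvBB u v : dotv (u - v) (u - v) = dotv u u - dotv u v *+ 2 + dotv v v.
Proof.
rewrite dotvDl dotvNl ![dotv _ (u - v)]dotvC !dotvDl !dotvNl (dotvC v u).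
ring.
Qed.

Lemma dotvv_ge0 u : 0 <= dotv u u.
Proof. by apply: sumr_ge0 => i _; rewrite -expr2 sqr_ge0. Qed.

Lemma dotvv_eq0 u : (dotv u u == 0) = (u == 0).
Proof.
apply/idP/eqP => [|->]; last by rewrite dotv0l.
rewrite psumr_eq0 => [/allP u0|i _]; last by rewrite -expr2 sqr_ge0.
apply/matrixP => i j; rewrite (ord1 j) !mxE.
by have /(_ (mem_index_enum i)) := u0 i; rewrite -expr2 sqrf_eq0 => /eqP.
Qed.

Lemma dotv_sqr_le u v : dotv u v ^+ 2 <= dotv u u * dotv v v.
Proof.
have [->|v0] := eqVneq v 0; first by rewrite dotvC !dotv0l expr0n mulr0.
have vv_gt0 : 0 < dotv v v by rewrite lt0r dotvv_eq0 v0 dotvv_ge0.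
have := dotvv_ge0 (dotv v v *: u - dotv u v *: v).
rewrite dotvBB !dotvZl !dotvZr => h.
rewrite -(ler_pM2l vv_gt0); nra.
Qed.

Lemma dotvv_le_of_dotv_ge u v : dotv v v <= dotv u v -> dotv v v <= dotv u u.
Proof.
move=> vu; have := dotv_sqr_le u v; have := dotvv_ge0 v; have := dotvv_ge0 u.
nra.
Qed.

Lemma dotv_ge_eq u v : dotv u u = dotv v v -> dotv v v <= dotv u v -> u = v.
Proof.
move=> uv vu; apply/eqP; rewrite -subr_eq0 -dotvv_eq0 eq_le dotvv_ge0 andbT.
by rewrite dotvBB uv; lra.
Qed.

End dot_product.

Lemma continuous_sum (R : numFieldType) (T : topologicalType) (I : Type)
    (r : seq I) (F : I -> T -> R) :
  (forall i, continuous (F i)) -> continuous (fun x => \sum_(i <- r) F i x).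
Proof.
move=> cF; elim: r => [|i r IHr] x.
  by under eq_fun do rewrite big_nil; exact: cst_continuous.
by under eq_fun do rewrite big_cons; exact: (continuousD (cF i x) (IHr x)).
Qed.

Lemma addr_continuous (G : topologicalZmodType) (h : G) : continuous (+%R h).
Proof.
move=> x; apply: (@continuous_comp _ _ _ (pair h) (fun p : G * G => p.1 + p.2)).
  by apply: cvg_pair; [exact: cvg_cst | exact: cvg_id].
exact: add_continuous.
Qed.

Lemma continuous_borel_measurable (R : realType) (G : topologicalZmodType)
    (f : G -> R) :
  continuous f -> measurable_fun [set: Borel G] (f : Borel G -> R).
Proof.
move=> cf; apply: (measurability _ (RGenOpens.measurableE R)) => //.
move=> _ [_ [x [y ->]] <-]; rewrite setTI.
apply: sub_sigma_algebra; apply: open_comp; last exact: interval_open.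
by move=> z _; exact: cf.
Qed.

Lemma continuous_borel_preimage (R : realType) (G : topologicalZmodType)
    (f : G -> R) (S : set R) :
  continuous f -> measurable S -> measurable (f @^-1` S : set (Borel G)).
Proof.
move=> /continuous_borel_measurable mf mS.
by rewrite -[X in measurable X]setTI; exact: mf.
Qed.

Lemma integral_eta_step (R : realType) d (T : measurableType d)
    (mu : {measure set T -> \bar R}) (f : T -> R) (b : R) :
  measurable_fun [set: T] f ->
  (\int[mu]_(x in [set: T]) (eta_step b (f x))%:E = mu (f @^-1` `]-oo, b]))%E.
Proof.
move=> mf; have mA : measurable (f @^-1` `]-oo, b]).
  by rewrite -[X in measurable X]setTI; exact: mf.
rewrite -[in RHS](setIT (f @^-1` _)) -integral_indic //.
apply: eq_integral => x _.
rewrite indicE /eta_step /heaviside subr_ge0.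
have fxE : (x \in f @^-1` `]-oo, b]) = (f x <= b).
  by apply/idP/idP; rewrite inE /preimage /= in_itv.
by rewrite fxE; case: (f x <= b).
Qed.

(* [compact_cover] is stated for pointed spaces; a topological group is pointed by 0. *)
Definition pointed_zmod (G : topologicalZmodType) : Type := G.
HB.instance Definition _ (G : topologicalZmodType) :=
  Topological.copy (pointed_zmod G) G.
HB.instance Definition _ (G : topologicalZmodType) :=
  isPointed.Build (pointed_zmod G) 0.

Lemma compact_cover_zmod (G : topologicalZmodType) (A : set G) :
  compact A -> cover_compact A.
Proof. by move=> cA; have : @compact (pointed_zmod G) A := cA; rewrite compact_cover. Qed.

Section normalized_haar.
Variables (R : realType) (G : topologicalZmodType)
  (mu : {measure set (Borel G) -> \bar R}).
Hypotheses (compactG : compact [set: G]) (haar_mu : normalized_haar mu).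

Lemma haar_setT : mu [set: Borel G] = 1%E.
Proof. by case: haar_mu. Qed.

Lemma haar_translate (h : G) (A : set (Borel G)) : measurable A ->
  mu [set g | A (h + g)] = mu A.
Proof.
case: haar_mu => _ mu_tr _ _ mA; rewrite -(mu_tr (- h) A mA); congr (mu _).
apply/seteqP; split => [g /= Ahg|_ [x Ax <-]] /=.
  by exists (h + g) => //; rewrite addKr.
by rewrite addNKr.
Qed.

(* Finitely many translates of U cover G, so a null U would make G null. *)
Lemma haar_open_gt0 (U : set G) : open U -> U !=set0 -> (0 < mu U)%E.
Proof.
move=> oU [u Uu]; rewrite lt0e measure_ge0 andbT; apply/negP => /eqP mU0.
pose V (g : G) := [set x | U (- g + x)].
have oV g : open (V g).
  by apply: open_comp => // x _; exact: addr_continuous.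
have covV : [set: G] `<=` \bigcup_(g in [set: G]) V g.
  by move=> x _; exists (x - u) => //; rewrite /V /= opprB addrNK.
have coverG := compact_cover_zmod compactG.
have [D _] := coverG G [set: G] V (fun g _ => oV g) covV.
set D' := (X in cover X V) => DV.
have : (mu [set: Borel G] <= \sum_(g \in D') mu (V g))%E.
  apply: content_sub_fsum => // [|g _]; first exact: finite_fset.
  exact: sub_sigma_algebra.
rewrite haar_setT fsbig1 ?lee_fin ?ler10 // => g _.
by rewrite haar_translate ?mU0 //; exact: sub_sigma_algebra.
Qed.

Let mu_fin_num : fin_num_fun mu.
Proof.
move=> A mA; rewrite ge0_fin_numE ?measure_ge0 //.
rewrite (@le_lt_trans _ _ (mu [set: Borel G])) //; last by rewrite haar_setT ltey.
by apply: le_measure; rewrite ?inE.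
Qed.

Let mu_sigma_finite : sigma_finite [set: Borel G] mu.
Proof. by apply: fin_num_fun_sigma_finite => //; rewrite measure0. Qed.

Let haar : {sigma_finite_measure set (Borel G) -> \bar R} :=
  HB.pack_for (sigma_finite_measure (Borel G) R) (Measure.sort mu)
    (isSFinite.Build _ _ _ _ (sfinite_measure_sigma_finite mu_sigma_finite))
    (isSigmaFinite.Build _ _ _ _ mu_sigma_finite).

(* Fubini on {(x, y) | y - x \in A}, whose sections are translates of A and of -A.
   The hypothesis is needed: the product sigma-algebra may be smaller than the
   Borel sets of G * G. *)
Lemma haar_oppr (A : set G) :
  measurable [set p : Borel G * Borel G | A (p.2 - p.1)] ->
  mu [set g | A (- g)] = mu A.
Proof.
set S := [set p | _] => mS.
have mS_x (x : Borel G) : measurable [set y : Borel G | A (y - x)].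
  by have := measurable_xsection x mS; rewrite xsectionE.
have mS_y (y : Borel G) : measurable [set x : Borel G | A (y - x)].
  by have := measurable_ysection y mS; rewrite ysectionE.
have mA : measurable (A : set (Borel G)).
  by have := mS_x 0; congr measurable; apply/seteqP; split => y; rewrite /= subr0.
have mAN : measurable [set g : Borel G | A (- g)].
  by have := mS_y 0; congr measurable; apply/seteqP; split => x; rewrite /= sub0r.
have mf : measurable_fun [set: Borel G * Borel G] (EFin \o \1_S : _ -> \bar R).
  exact/measurable_EFinP/measurable_indic.
have := @fubini_tonelli _ _ _ _ R haar haar (EFin \o \1_S) mf.
have int_indic (B : set (Borel G)) : measurable B ->
    (\int[haar]_x (\1_B x)%:E = mu B)%E.
  by move=> mB; rewrite integral_indic // setIT.
rewrite (eq_integral (fun _ => mu A)); last first.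
  move=> x _; rewrite [LHS](int_indic _ (mS_x x)) -(haar_translate (- x) mA).
  by congr (mu _); apply/seteqP; split => y; rewrite /= addrC.
rewrite [in RHS](eq_integral (fun _ => mu [set g | A (- g)])); last first.
  move=> y _; rewrite [LHS](int_indic _ (mS_y y)) -(haar_translate (- y) mAN).
  by congr (mu _); apply/seteqP; split => x; rewrite /= opprD opprK addrC.
by rewrite !integral_cst //= haar_setT !mule1 => ->.
Qed.

Lemma haar_sublevel_eq1 (f : G -> R) (c : R) : continuous f ->
  mu (f @^-1` `]-oo, c] : set (Borel G)) = 1%E -> forall g, f g <= c.
Proof.
move=> cf fc1 g; rewrite leNgt; apply/negP => cfg.
set A := f @^-1` `]-oo, c] in fc1; set B := f @^-1` `]c, +oo[.
have mA : measurable (A : set (Borel G)).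
  by apply: continuous_borel_preimage => //; exact: measurable_itv.
have mB : measurable (B : set (Borel G)).
  by apply: continuous_borel_preimage => //; exact: measurable_itv.
have B_gt0 : (0 < mu B)%E.
  apply: haar_open_gt0; last by exists g; rewrite /B /preimage /= in_itv /= andbT.
  by apply: open_comp => [x _|]; [exact: cf | exact: interval_open].
have AB0 : A `&` B = set0.
  apply/seteqP; split => x // []; rewrite /A /B /preimage /= !in_itv /= andbT.
  by move=> /le_lt_trans fxc /fxc; rewrite ltxx.
have ABT : A `|` B = [set: Borel G].
  apply/seteqP; split => x // _; rewrite /A /B /preimage /= !in_itv /= andbT.
  by case: (leP (f x) c) => fxc; [left | right].
have : (mu A + mu B = 1)%E by rewrite -measureU // ABT; exact: haar_setT.
rewrite fc1.
by move: B_gt0; case: (mu B) => [r||] //; rewrite lte_fin => r0 [] /=; lra.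
Qed.

End normalized_haar.

Section unitary_representation.
Variables (R : realType) (G : topologicalZmodType) (d : nat)
  (rep : G -> 'M[R]_d).
Hypothesis unitary : unitary_rep rep.

Lemma rep0 : rep 0 = 1%:M.
Proof. by case: unitary. Qed.

Lemma repD g h : rep (g + h) = rep g *m rep h.
Proof. by case: unitary. Qed.

Lemma repN g : rep (- g) = (rep g)^T.
Proof.
case: unitary => _ _ rep_orth _.
by rewrite -[RHS]mulmx1 -rep0 -(subrr g) repD mulmxA rep_orth mul1mx.
Qed.

Lemma dotv_rep g u v : dotv (rep g *m u) (rep g *m v) = dotv u v.
Proof. by case: unitary => _ _ rep_orth _; rewrite dotv_mulmxl mulmxA rep_orth mul1mx. Qed.

Lemma continuous_rep_dotv (u v : 'cV[R]_d) :
  continuous (fun g => dotv (rep g *m u) v).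
Proof.
case: unitary => _ _ _ rep_cont.
have rep_u_cont i : continuous (fun g => (rep g *m u) i ord0).
  under eq_fun do rewrite mxE.
  by apply: continuous_sum => j g; apply: continuousM; [exact: rep_cont | exact: cst_continuous].
by apply: continuous_sum => i g; apply: continuousM; [exact: rep_u_cont | exact: cst_continuous].
Qed.

Lemma measurable_rep_sub_entry i j :
  measurable_fun [set: Borel G * Borel G] (fun p => rep (p.2 - p.1) i j).
Proof.
case: unitary => _ _ _ rep_cont.
have mrep k l : measurable_fun [set: Borel G] (fun g : Borel G => rep g k l).
  exact: continuous_borel_measurable.
under eq_fun do rewrite repD repN !mxE.
apply: measurable_sum => k; apply: measurable_funM.
  exact: measurableT_comp (mrep i k) measurable_snd.
under eq_fun do rewrite mxE.
exact: measurableT_comp (mrep j k) measurable_fst.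
Qed.

Lemma measurable_dotv_rep_sub (u v : 'cV[R]_d) :
  measurable_fun [set: Borel G * Borel G] (fun p => dotv u (rep (p.2 - p.1) *m v)).
Proof.
apply: measurable_sum => i; apply: measurable_funM; first exact: measurable_cst.
under eq_fun do rewrite mxE.
apply: measurable_sum => j; apply: measurable_funM; last exact: measurable_cst.
exact: measurable_rep_sub_entry.
Qed.

End unitary_representation.

Section projection_cdf.
Variables (R : realType) (G : topologicalZmodType) (d : nat)
  (mu : {measure set (Borel G) -> \bar R}) (rep : G -> 'M[R]_d).
Hypotheses (compactG : compact [set: G]) (haar_mu : normalized_haar mu)
  (unitary : unitary_rep rep).

Lemma mu_t_integral (I t : 'cV[R]_d) (b : R) :
  mu_t mu rep I t b
  = (\int[mu]_(g in [set: Borel G]) (eta_step b (dotv I (rep g *m t)))%:E)%E.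
Proof.
pose psi g := dotv I (rep g *m t).
have psi_cont : continuous psi.
  by rewrite /psi; under eq_fun do rewrite dotvC; exact: continuous_rep_dotv.
rewrite integral_eta_step; last exact: continuous_borel_measurable.
rewrite /mu_t /proj_law /pushforward.
have -> : (fun g => dotv (rep g *m I) t) = psi \o -%R.
  by apply/funext => g; rewrite /= /psi dotv_mulmxl repN.
apply: (haar_oppr haar_mu (A := psi @^-1` `]-oo, b])).
rewrite -[X in measurable X]setTI.
exact: measurable_dotv_rep_sub unitary I t measurableT _ (measurable_itv _).
Qed.

Lemma mu_t_translate (h : G) (I t : 'cV[R]_d) :
  mu_t mu rep (rep h *m I) t = mu_t mu rep I t.
Proof.
apply/funext => b; rewrite /mu_t /proj_law /pushforward.
rewrite -[RHS](haar_translate haar_mu h); last first.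
  by apply: continuous_borel_preimage (measurable_itv _); exact: continuous_rep_dotv.
by congr (mu _); apply/funext => g; rewrite /preimage /= mulmxA -repD // addrC.
Qed.

(* The CDF of <g I, t> equals 1 at max_g <g I, t>, hence so does the CDF of
   <g J, t>, which therefore bounds <J, t>. *)
Lemma mu_t_max_ge (I J t : 'cV[R]_d) : mu_t mu rep I t = mu_t mu rep J t ->
  exists g, dotv J t <= dotv (rep g *m I) t.
Proof.
move=> IJ; pose phi g := dotv (rep g *m I) t.
have G0 : [set: G] !=set0 by exists 0.
have [gm _ gm_max] := compact_EVT_max G0 compactG
  (continuous_subspaceT (continuous_rep_dotv unitary (u := I) (v := t))).
have cdfI1 : mu_t mu rep I t (phi gm) = 1%E.
  rewrite /mu_t /proj_law /pushforward -(haar_setT haar_mu); congr (mu _).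
  apply/seteqP; split => g // _; rewrite /preimage /= in_itv /=.
  by apply: gm_max; rewrite in_setT.
exists gm; move: cdfI1; rewrite IJ.
move=> /(haar_sublevel_eq1 compactG haar_mu (continuous_rep_dotv unitary (u := J) (v := t))).
by move=> /(_ 0); rewrite rep0 // mul1mx.
Qed.

Lemma mu_t_orbit_dotv_ge (I K : 'cV[R]_d) :
  (forall t, t \in @unit_sphere R d -> mu_t mu rep I t = mu_t mu rep K t) ->
  exists g, dotv K K <= dotv (rep g *m I) K.
Proof.
move=> IK; have [->|K0] := eqVneq K 0.
  by exists 0; rewrite dotv0l dotvC dotv0l.
pose s := Num.sqrt (dotv K K).
have s_gt0 : 0 < s by rewrite sqrtr_gt0 lt0r dotvv_eq0 K0 dotvv_ge0.
have ssE : s * s = dotv K K by rewrite -expr2 sqr_sqrtr // dotvv_ge0.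
have t_unit : s^-1 *: K \in @unit_sphere R d.
  apply/mem_set; rewrite /unit_sphere /= dotvZl dotvZr -ssE.
  by rewrite mulrA -invfM mulVf // gt_eqF // mulr_gt0.
have [g] := mu_t_max_ge (IK _ t_unit).
by rewrite !dotvZr ler_pM2l ?invr_gt0 //; exists g.
Qed.

Lemma orbit_equiv_mu_t (I I' : 'cV[R]_d) :
  orbit_equiv rep I I' <->
  (forall t, t \in @unit_sphere R d -> mu_t mu rep I t = mu_t mu rep I' t).
Proof.
split => [[h <-] t _|II']; first by rewrite mu_t_translate.
have [g I'_le] := mu_t_orbit_dotv_ge II'.
have [g' I_le] := mu_t_orbit_dotv_ge (fun t ht => esym (II' t ht)).
have := dotvv_le_of_dotv_ge I'_le; rewrite dotv_rep // => norm_I'_le.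
have := dotvv_le_of_dotv_ge I_le; rewrite dotv_rep // => norm_I_le.
exists g; apply: dotv_ge_eq I'_le.
by rewrite dotv_rep //; apply/eqP; rewrite eq_le norm_I_le norm_I'_le.
Qed.

End projection_cdf.

Theorem theorem5 (R : realType) (G : topologicalZmodType) (d : nat)
    (mu : {measure set (Borel G) -> \bar R}) (rep : G -> 'M[R]_d) :
  hausdorff_space G -> compact [set: G] ->
  normalized_haar mu -> unitary_rep rep ->
  (forall (I t : 'cV[R]_d), t \in @unit_sphere R d -> forall b : R,
      mu_t mu rep I t b
      = (\int[mu]_(g in [set: Borel G]) (eta_step b (dotv I (rep g *m t)))%:E)%E)
  /\
  (forall I I' : 'cV[R]_d,
      orbit_equiv rep I I' <->
      (forall t : 'cV[R]_d, t \in @unit_sphere R d -> mu_t mu rep I t = mu_t mu rep I' t)).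
Proof.
move=> _ compactG haar_mu unitary; split => [I t _ b|I I'].
  exact: mu_t_integral.
exact: orbit_equiv_mu_t.
Qed.
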